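(* Under Rayleigh fading (all $m_{ij}=1$), for every target rate $r>0$, $P_{\rm r}>0$ and $\mathcal C_x\in[0,1)$, \[ \mathcal P_{\rm sr}(P_{\rm r},\mathcal C_x)\le 1-\exp\!\left(-\frac{P_{\rm r}\pi_{\rm rr}+1}{P_{\rm s}\pi_{\rm sr}}\Psi_r(\alpha\,\mathcal C_x)\right)=:\mathcal P^{\rm UB}_{\rm sr,RF}(P_{\rm r},\mathcal C_x), \qquad \alpha=\frac{P_{\rm r}\pi_{\rm rr}}{P_{\rm r}\pi_{\rm rr}+1}. \]
   Context: Let $P_{\rm s}>0$, $P_{\rm r}>0$ be the source and relay transmit powers. Rayleigh fading: $g_{\rm sr},g_{\rm rr}$ are independent exponential random variables with means $\pi_{\rm sr},\pi_{\rm rr}>0$. For $\mathcal C_x\in[0,1)$ define $R_{\rm sr}(P_{\rm r},\mathcal C_x)=\tfrac12\log_2\frac{(P_{\rm s}g_{\rm sr}+P_{\rm r}g_{\rm rr}+1)^2-(P_{\rm r}g_{\rm rr}\mathcal C_x)^2}{(P_{\rm r}g_{\rm rr}+1)^2-(P_{\rm r}g_{\rm rr}\mathcal C_x)^2}$. For a target rate $r>0$ put $\gamma=2^{2r}-1$ and $\Psi_r(x)=\sqrt{1+\gamma(1-x^2)}-1$. The S–R outage probability is $\mathcal P_{\rm sr}=\mathbb P\{R_{\rm sr}<r\}$. *)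

From Stdlib Require Import Reals.
Open Scope R_scope.

Definition log2 (x : R) : R := ln x / ln 2.

Definition Rsr (Ps Pr Cx gsr grr : R) : R :=
  / 2 * log2 (((Ps * gsr + Pr * grr + 1) ^ 2 - (Pr * grr * Cx) ^ 2) /
              ((Pr * grr + 1) ^ 2 - (Pr * grr * Cx) ^ 2)).

Definition gamma_r (r : R) : R := Rpower 2 (2 * r) - 1.
Definition Psi (r x : R) : R := sqrt (1 + gamma_r r * (1 - x ^ 2)) - 1.

Definition exp_density (m x : R) : R := / m * exp (- x / m).

Definition outage_ind (Ps Pr Cx r gsr grr : R) : R :=
  if Rlt_dec (Rsr Ps Pr Cx gsr grr) r then 1 else 0.

Definition ImproperInt0 (f : R -> R) (l : R) : Prop :=
  exists F : R -> R,
    (forall b, 0 <= b -> exists pr : Riemann_integrable f 0 b, RiemannInt pr = F b) /\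
    (forall eps, 0 < eps -> exists M, forall b, M <= b -> Rabs (F b - l) < eps).

(* P_sr = P{R_sr < r} with gsr ~ Exp(mean pisr), grr ~ Exp(mean pirr) independent,
   written as the iterated integral
   int_0^oo ( int_0^oo 1{R_sr(x,y)<r} f_sr(x) dx ) f_rr(y) dy = P. *)
Definition outage_prob_is (Ps Pr Cx r pisr pirr P : R) : Prop :=
  exists I : R -> R,
    (forall y, 0 <= y ->
       ImproperInt0 (fun x => outage_ind Ps Pr Cx r x y * exp_density pisr x) (I y)) /\
    ImproperInt0 (fun y => I y * exp_density pirr y) P.

Definition Psr_UB_RF (Ps Pr Cx r pisr pirr : R) : R :=
  let alpha := Pr * pirr / (Pr * pirr + 1) in
  1 - exp (- ((Pr * pirr + 1) / (Ps * pisr)) * Psi r (alpha * Cx)).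

(* Conditionally on the loop gain [grr = y], outage forces the source SNR [Ps gsr] below a
   threshold [t (Pr y)], so the conditional outage probability is at most the exponential cdf
   [F (t (Pr y) / Ps)] of [gsr].  The threshold is [sqrt q - a - 1] for a quadratic [q] with
   [4AD <= B^2], hence concave, and [F] is concave and nondecreasing; so the conditional bound is
   concave in [y], and Jensen's inequality (via its tangent line at the mean) bounds its average
   over [grr ~ Exp(pirr)] by its value at [y = pirr], which is the claimed expression. *)

From Stdlib Require Import Reals Lra Psatz.
From Coquelicot Require Import Coquelicot.
Open Scope R_scope.

Definition exp_cdf (m x : R) : R := 1 - exp (- x / m).

Lemma ImproperInt0_le (f : R -> R) (l K : R) :
  (forall b, 0 <= b -> ex_RInt f 0 b -> RInt f 0 b <= K) ->
  ImproperInt0 f l -> l <= K.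
Proof.
  intros HK [F [HF Hl]].
  destruct (Rle_lt_dec l K) as [H | H]; [exact H | exfalso].
  destruct (Hl (l - K)) as [M HM]; [lra |].
  pose proof (Rmax_r M 0) as Hb.
  destruct (HF _ Hb) as [pr Hpr].
  pose proof (HK _ Hb (ex_RInt_Reals_1 _ _ _ pr)) as HFK.
  rewrite (RInt_Reals _ _ _ pr), Hpr in HFK.
  pose proof (Rabs_def2 _ _ (HM _ (Rmax_l M 0))).
  lra.
Qed.

Section ExponentialDistribution.

Variable m : R.
Hypothesis m_pos : 0 < m.

Lemma exp_density_nonneg (x : R) : 0 <= exp_density m x.
Proof.
  unfold exp_density. apply Rmult_le_pos.
  - apply Rlt_le, Rinv_0_lt_compat, m_pos.
  - apply Rlt_le, exp_pos.
Qed.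

Lemma exp_cdf_le (x y : R) : x <= y -> exp_cdf m x <= exp_cdf m y.
Proof.
  intros Hxy. unfold exp_cdf.
  assert (Harg : - y / m <= - x / m)
    by (apply Rmult_le_compat_r; [apply Rlt_le, Rinv_0_lt_compat, m_pos | lra]).
  destruct (Rle_lt_or_eq_dec _ _ Harg) as [Hlt | ->]; [apply exp_increasing in Hlt |]; lra.
Qed.

Lemma exp_cdf_nonneg (x : R) : 0 <= x -> 0 <= exp_cdf m x.
Proof.
  intros Hx.
  replace 0 with (exp_cdf m 0) by (unfold exp_cdf, Rdiv; rewrite Ropp_0, Rmult_0_l, exp_0; ring).
  now apply exp_cdf_le.
Qed.

Lemma exp_cdf_le_tangent (x0 x : R) :
  exp_cdf m x <= exp_cdf m x0 + exp_density m x0 * (x - x0).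
Proof.
  unfold exp_cdf, exp_density.
  assert (Hsplit : exp (- x / m) = exp (- x0 / m) * exp (- ((x - x0) / m))).
  { rewrite <- exp_plus. f_equal. field. lra. }
  assert (Hexp := exp_ineq1_le (- ((x - x0) / m))).
  assert (Hx0 := exp_pos (- x0 / m)).
  rewrite Hsplit.
  replace (/ m * exp (- x0 / m) * (x - x0)) with (exp (- x0 / m) * ((x - x0) / m))
    by (field; lra).
  nra.
Qed.

Lemma is_RInt_tangent_exp_density (v k b : R) :
  is_RInt (fun y => (v + k * (y - m)) * exp_density m y) 0 b
    (v - exp (- b / m) * (v + k * b)).
Proof.
  set (F := fun y => - exp (- y / m) * (v + k * y)).
  replace (v - exp (- b / m) * (v + k * b)) with (minus (F b) (F 0)).
  - apply (is_RInt_derive (V := R_CompleteNormedModule) F).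
    + intros y _. unfold F, exp_density. auto_derive; [easy|]. unfold Rdiv. field. lra.
    + intros y _. apply (ex_derive_continuous (fun y => (v + k * (y - m)) * exp_density m y)).
      unfold exp_density. auto_derive. easy.
  - unfold F, minus, plus, opp; simpl.
    replace (- 0 / m) with 0 by (field; lra). rewrite exp_0. ring.
Qed.

Lemma is_RInt_exp_density (b : R) : is_RInt (exp_density m) 0 b (exp_cdf m b).
Proof.
  replace (exp_cdf m b) with (1 - exp (- b / m) * (1 + 0 * b)) by (unfold exp_cdf; ring).
  apply (is_RInt_ext (fun y => (1 + 0 * (y - m)) * exp_density m y)).
  - intros x _. simpl. ring.
  - apply is_RInt_tangent_exp_density.
Qed.

Lemma ImproperInt0_exp_density_le_cdf (f : R -> R) (T l : R) :
  0 <= T ->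
  (forall x, 0 <= x -> f x <= 1) ->
  (forall x, T <= x -> f x <= 0) ->
  ImproperInt0 (fun x => f x * exp_density m x) l ->
  l <= exp_cdf m T.
Proof.
  intros HT Hf1 Hf0. apply ImproperInt0_le. intros b Hb Hint.
  set (g := fun x => f x * exp_density m x) in *.
  assert (Hdom : forall c, 0 <= c -> ex_RInt g 0 c -> RInt g 0 c <= exp_cdf m c).
  { intros c Hc Hc_int. rewrite <- (is_RInt_unique _ _ _ _ (is_RInt_exp_density c)).
    apply RInt_le; [exact Hc | exact Hc_int | eexists; apply is_RInt_exp_density |].
    intros x Hx. unfold g. pose proof (exp_density_nonneg x).
    pose proof (Hf1 x ltac:(lra)). nra. }
  destruct (Rle_lt_dec b T) as [HbT | HTb].
  - eapply Rle_trans; [apply Hdom; assumption | apply exp_cdf_le, HbT].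
  - assert (H0T : ex_RInt g 0 T) by (apply (ex_RInt_Chasles_1 g 0 T b); [lra | exact Hint]).
    assert (HTb_int : ex_RInt g T b) by (apply (ex_RInt_Chasles_2 g 0 T b); [lra | exact Hint]).
    rewrite <- (RInt_Chasles g 0 T b H0T HTb_int).
    assert (Htail : RInt g T b <= RInt (fun _ => 0) T b).
    { apply RInt_le; [lra | exact HTb_int | apply ex_RInt_const |].
      intros x Hx. unfold g. pose proof (exp_density_nonneg x).
      pose proof (Hf0 x ltac:(lra)). nra. }
    rewrite RInt_const in Htail.
    pose proof (Hdom T HT H0T).
    unfold plus, scal in *; simpl in *. unfold mult in *; simpl in *. lra.
Qed.

(* Jensen's inequality through a supporting line at the mean [m]; nonnegativity of the line
   controls the boundary term [exp (- b / m) * (v + k * b)] of the truncated integrals. *)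
Lemma ImproperInt0_exp_density_le_tangent (h : R -> R) (v k l : R) :
  (forall y, 0 <= y -> h y <= v + k * (y - m)) ->
  (forall y, 0 <= y -> 0 <= v + k * (y - m)) ->
  ImproperInt0 (fun y => h y * exp_density m y) l ->
  l <= v.
Proof.
  intros Hh Hpos. apply ImproperInt0_le. intros b Hb Hint.
  pose proof (is_RInt_tangent_exp_density v k b) as Hline.
  apply Rle_trans with (v - exp (- b / m) * (v + k * b)).
  - rewrite <- (is_RInt_unique _ _ _ _ Hline).
    apply RInt_le; [exact Hb | exact Hint | eexists; exact Hline |].
    intros y Hy. apply Rmult_le_compat_r; [apply exp_density_nonneg | apply Hh; lra].
  - pose proof (Hpos (b + m) ltac:(lra)). pose proof (exp_pos (- b / m)).
    replace (v + k * (b + m - m)) with (v + k * b) in * by ring. nra.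
Qed.

End ExponentialDistribution.

Lemma gamma_r_nonneg (r : R) : 0 <= r -> 0 <= gamma_r r.
Proof.
  intros Hr. unfold gamma_r. rewrite <- (Rpower_O 2) at 1 by lra.
  assert (Rpower 2 0 <= Rpower 2 (2 * r)) by (apply Rle_Rpower; lra). lra.
Qed.

Lemma lt_of_half_log2_lt (z r : R) : 0 < z -> / 2 * log2 z < r -> z < 1 + gamma_r r.
Proof.
  intros Hz Hlog. unfold log2 in Hlog.
  assert (Hln2 : 0 < ln 2) by (rewrite <- ln_1; apply ln_increasing; lra).
  replace (1 + gamma_r r) with (exp (2 * r * ln 2)) by (unfold gamma_r, Rpower; ring).
  apply ln_lt_inv; [exact Hz | apply exp_pos |].
  rewrite ln_exp.
  apply Rmult_lt_compat_l with (r := 2 * ln 2) in Hlog; [| lra].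
  replace (2 * ln 2 * (/ 2 * (ln z / ln 2))) with (ln z) in Hlog by (field; lra).
  lra.
Qed.

(* Outage threshold for the source SNR [Ps gsr] when the loop-interference SNR is [a = Pr grr]. *)
Definition outage_snr (r C a : R) : R :=
  sqrt ((1 + gamma_r r) * (a + 1) ^ 2 - gamma_r r * (a * C) ^ 2) - a - 1.

Lemma Rsr_lt_outage_snr (Ps Pr C r gsr grr : R) :
  0 <= Ps * gsr -> 0 <= Pr * grr -> 0 <= C <= 1 ->
  Rsr Ps Pr C gsr grr < r -> Ps * gsr < outage_snr r C (Pr * grr).
Proof.
  unfold Rsr, outage_snr. set (s := Ps * gsr). set (a := Pr * grr).
  intros Hs Ha HC Hrate.
  set (D := (a + 1) ^ 2 - (a * C) ^ 2) in Hrate.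
  set (N := (s + a + 1) ^ 2 - (a * C) ^ 2) in Hrate.
  assert (HaC : 0 <= a * C <= a) by (split; nra).
  assert (HD : 0 < D) by (unfold D; nra).
  assert (HND : D <= N) by (unfold D, N; nra).
  apply lt_of_half_log2_lt in Hrate; [| apply Rdiv_lt_0_compat; lra].
  apply Rmult_lt_compat_r with (r := D) in Hrate; [| exact HD].
  replace (N / D * D) with N in Hrate by (field; lra).
  assert (Hsqrt : sqrt ((s + a + 1) ^ 2)
                  < sqrt ((1 + gamma_r r) * (a + 1) ^ 2 - gamma_r r * (a * C) ^ 2)).
  { apply sqrt_lt_1_alt. split; [apply pow2_ge_0 |]. unfold N, D in Hrate. nra. }
  rewrite sqrt_pow2 in Hsqrt by lra. lra.
Qed.

Lemma outage_snr_nonneg (r C a : R) : 0 <= r -> 0 <= C <= 1 -> 0 <= a -> 0 <= outage_snr r C a.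
Proof.
  intros Hr HC Ha. unfold outage_snr.
  pose proof (gamma_r_nonneg r Hr).
  assert (a + 1 <= sqrt ((1 + gamma_r r) * (a + 1) ^ 2 - gamma_r r * (a * C) ^ 2)).
  { rewrite <- (sqrt_pow2 (a + 1)) at 1 by lra. apply sqrt_le_1_alt.
    assert ((a * C) ^ 2 <= (a + 1) ^ 2) by (assert (0 <= a * C <= a) by (split; nra); nra).
    nra. }
  lra.
Qed.

Lemma outage_snr_Psi (r C a : R) :
  0 <= a -> outage_snr r C a = (a + 1) * Psi r (a / (a + 1) * C).
Proof.
  intros Ha. unfold outage_snr, Psi.
  replace ((1 + gamma_r r) * (a + 1) ^ 2 - gamma_r r * (a * C) ^ 2)
    with ((a + 1) ^ 2 * (1 + gamma_r r * (1 - (a / (a + 1) * C) ^ 2))) by (field; lra).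
  rewrite sqrt_mult_alt, sqrt_pow2 by (try apply pow2_ge_0; lra). ring.
Qed.

(* [4AD <= B^2] is what makes [sqrt q] concave; [A, B, D >= 0] keep the tangent nonnegative. *)
Lemma sqrt_quadratic_le_tangent (A B D a0 a : R) :
  0 <= A -> 0 <= B -> 0 < D -> 4 * A * D <= B ^ 2 -> 0 <= a0 -> 0 <= a ->
  sqrt (A * a ^ 2 + B * a + D) <=
  sqrt (A * a0 ^ 2 + B * a0 + D)
  + (2 * A * a0 + B) / (2 * sqrt (A * a0 ^ 2 + B * a0 + D)) * (a - a0).
Proof.
  intros HA HB HD Hdisc Ha0 Ha.
  set (q0 := A * a0 ^ 2 + B * a0 + D).
  set (s0 := sqrt q0).
  assert (Hq0 : 0 < q0) by (unfold q0; nra).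
  assert (Hs0 : 0 < s0) by (apply sqrt_lt_R0, Hq0).
  assert (Hss : s0 * s0 = q0) by (apply sqrt_sqrt; lra).
  set (L := s0 + (2 * A * a0 + B) / (2 * s0) * (a - a0)).
  assert (HL : 2 * s0 * L = 2 * A * a0 * a + B * (a + a0) + 2 * D).
  { transitivity (2 * (s0 * s0) + (2 * A * a0 + B) * (a - a0)); [unfold L; field; lra |].
    rewrite Hss. unfold q0. ring. }
  assert (HLpos : 0 <= L).
  { apply (Rmult_le_reg_l (2 * s0)); [lra |]. rewrite Rmult_0_r, HL.
    assert (0 <= A * a0 * a) by (apply Rmult_le_pos; [apply Rmult_le_pos |]; lra).
    assert (0 <= B * (a + a0)) by (apply Rmult_le_pos; lra).
    lra. }
  assert (HL2 : 4 * q0 * (L * L - (A * a ^ 2 + B * a + D)) = (a - a0) ^ 2 * (B ^ 2 - 4 * A * D)).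
  { transitivity ((2 * s0 * L) ^ 2 - 4 * q0 * (A * a ^ 2 + B * a + D)); [rewrite <- Hss; ring |].
    rewrite HL. unfold q0. ring. }
  assert (A * a ^ 2 + B * a + D <= L * L).
  { assert (0 <= (a - a0) ^ 2 * (B ^ 2 - 4 * A * D))
      by (apply Rmult_le_pos; [apply pow2_ge_0 | lra]).
    nra. }
  rewrite <- (sqrt_square L HLpos). apply sqrt_le_1_alt. assumption.
Qed.

Lemma outage_snr_supergradient (r C a0 : R) :
  0 <= r -> 0 <= C <= 1 -> 0 <= a0 ->
  exists k, forall a, 0 <= a -> outage_snr r C a <= outage_snr r C a0 + k * (a - a0).
Proof.
  intros Hr HC Ha0. pose proof (gamma_r_nonneg r Hr) as Hg.
  set (A := 1 + gamma_r r - gamma_r r * C ^ 2).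
  set (B := 2 * (1 + gamma_r r)).
  set (D := 1 + gamma_r r).
  assert (Hq : forall a,
             (1 + gamma_r r) * (a + 1) ^ 2 - gamma_r r * (a * C) ^ 2 = A * a ^ 2 + B * a + D)
    by (intros; unfold A, B, D; ring).
  exists ((2 * A * a0 + B) / (2 * sqrt (A * a0 ^ 2 + B * a0 + D)) - 1).
  intros a Ha. unfold outage_snr. rewrite !Hq.
  assert (HC2 : C ^ 2 <= 1) by nra.
  assert (HA : 0 <= A) by (unfold A; nra).
  assert (Hdisc : 4 * A * D <= B ^ 2) by (unfold A, B, D; nra).
  pose proof (sqrt_quadratic_le_tangent A B D a0 a HA
                ltac:(unfold B; lra) ltac:(unfold D; lra) Hdisc Ha0 Ha).
  lra.
Qed.

Lemma conditional_outage_le_exp_cdf (Ps Pr Cx r pisr y Iy : R) :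
  0 < Ps -> 0 < Pr -> 0 < pisr -> 0 <= r -> 0 <= Cx <= 1 -> 0 <= y ->
  ImproperInt0 (fun x => outage_ind Ps Pr Cx r x y * exp_density pisr x) Iy ->
  Iy <= exp_cdf pisr (outage_snr r Cx (Pr * y) / Ps).
Proof.
  intros HPs HPr Hsr Hr HC Hy.
  assert (HT : 0 <= outage_snr r Cx (Pr * y) / Ps)
    by (apply Rdiv_le_0_compat; [apply outage_snr_nonneg; nra | exact HPs]).
  apply ImproperInt0_exp_density_le_cdf; [exact Hsr | exact HT | |].
  - intros x _. unfold outage_ind. destruct Rlt_dec; lra.
  - intros x Hx. unfold outage_ind. destruct Rlt_dec as [Hout | _]; [exfalso | lra].
    apply Rsr_lt_outage_snr in Hout; [| nra | nra | exact HC].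
    apply Rmult_le_compat_l with (r := Ps) in Hx; [| lra].
    replace (Ps * (outage_snr r Cx (Pr * y) / Ps)) with (outage_snr r Cx (Pr * y)) in Hx
      by (field; lra).
    lra.
Qed.

Lemma Psr_UB_RF_exp_cdf (Ps Pr Cx r pisr pirr : R) :
  0 < Ps -> 0 < Pr -> 0 < pisr -> 0 < pirr ->
  Psr_UB_RF Ps Pr Cx r pisr pirr = exp_cdf pisr (outage_snr r Cx (Pr * pirr) / Ps).
Proof.
  intros HPs HPr Hsr Hrr. assert (Ha : 0 < Pr * pirr) by nra.
  unfold Psr_UB_RF, exp_cdf. rewrite outage_snr_Psi by lra.
  do 2 f_equal. field. lra.
Qed.

Theorem lemma4 (Ps Pr pisr pirr r Cx P : R) :
  0 < Ps -> 0 < Pr -> 0 < pisr -> 0 < pirr -> 0 < r ->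
  0 <= Cx -> Cx < 1 ->
  outage_prob_is Ps Pr Cx r pisr pirr P ->
  P <= Psr_UB_RF Ps Pr Cx r pisr pirr.
Proof.
  intros HPs HPr Hsr Hrr Hr HC0 HC1 [I [HI HP]].
  assert (HC : 0 <= Cx <= 1) by lra.
  set (T := fun y => outage_snr r Cx (Pr * y) / Ps).
  destruct (outage_snr_supergradient r Cx (Pr * pirr)) as [k Hk]; [lra | exact HC | nra |].
  set (v := exp_cdf pisr (T pirr)).
  set (slope := exp_density pisr (T pirr) * (k * Pr / Ps)).
  assert (Hmajor : forall y, 0 <= y -> exp_cdf pisr (T y) <= v + slope * (y - pirr)).
  { intros y Hy.
    assert (HTy : T y <= T pirr + k * Pr / Ps * (y - pirr)).
    { unfold T. pose proof (Hk (Pr * y) ltac:(nra)).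
      apply (Rmult_le_reg_l Ps); [exact HPs |]. field_simplify; [| lra | lra]. nra. }
    eapply Rle_trans; [apply exp_cdf_le; [exact Hsr | exact HTy] |].
    eapply Rle_trans; [apply (exp_cdf_le_tangent pisr Hsr (T pirr)) |].
    unfold v, slope. lra. }
  rewrite Psr_UB_RF_exp_cdf by assumption.
  apply (ImproperInt0_exp_density_le_tangent pirr Hrr I v slope); [| | exact HP].
  - intros y Hy. eapply Rle_trans; [| apply Hmajor, Hy].
    apply conditional_outage_le_exp_cdf; auto; lra.
  - intros y Hy. eapply Rle_trans; [| apply Hmajor, Hy].
    apply exp_cdf_nonneg; [exact Hsr |]. unfold T.
    apply Rdiv_le_0_compat; [apply outage_snr_nonneg; nra | exact HPs].
Qed.
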